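(* Let $U\subseteq\mathbb{R}^{p}$ and $V\subseteq\mathbb{R}^{q}$ be closed sets, and let $f:U\times V\to\mathbb{R}$ and $h:U\times V\to\mathbb{R}^m$ be continuous functions. For $y\in V$ define the set-valued map $G(y)=\{x\in U: h(x,y)\ge 0\}$ (inequality componentwise), with domain $\operatorname{dom}G=\{y\in V: G(y)\neq\emptyset\}$. Let $\{x^{(k)}\}_{k\ge 0}\subseteq U$ and $\{y^{(k)}\}_{k\ge0}\subseteq \operatorname{dom} G$ be sequences with $x^{(k)}\to x^*$ and $y^{(k)}\to y^*$, and let $\tau^{(k)}\ge 0$ with $\tau^{(k)}\to 0$ as $k\to\infty$. Assume that for each $k\ge 1$, $x^{(k)}$ is a minimizer of \[ \min_{x\in U}\ f(x,y^{(k)})+\tau^{(k)}\|x-x^{(k-1)}\|^2\quad \text{s.t.}\quad h(x,y^{(k)})\ge 0 . \] If the set-valued map $G$ is inner semicontinuous relative to $\operatorname{dom}G$, then $x^*$ is a minimizer of \[ \min_{x\in U}\ f(x,y^* )\quad\text{s.t.}\quad h(x,y^* )\ge 0 . \]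
   Context: A set-valued map $G$ defined on a set $V$ is inner semicontinuous at $y\in\operatorname{dom}G$ relative to $\operatorname{dom}G$ if for every $x\in G(y)$ and every sequence $\{y_\ell\}\subseteq\operatorname{dom}G$ with $y_\ell\to y$, there exists a sequence $x_\ell\in G(y_\ell)$ with $x_\ell\to x$. It is inner semicontinuous relative to $\operatorname{dom}G$ if this holds at every point of $\operatorname{dom}G$. $\|\cdot\|$ is the Euclidean norm. *)

From HB Require Import structures.
From mathcomp Require Import all_boot all_order all_algebra.
From mathcomp Require Import all_classical all_reals all_analysis.
Set Implicit Arguments. Unset Strict Implicit. Unset Printing Implicit Defensive.
Import Order.TTheory GRing.Theory Num.Theory.
Import numFieldNormedType.Exports.
Local Open Scope classical_set_scope.
Local Open Scope ring_scope.

(* Euclidean norm on row vectors R^n (mathcomp-analysis' built-in norm on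
   matrices is the sup norm, so we define the Euclidean one explicitly). *)
Definition enorm (R : realType) (n : nat) (x : 'rV[R]_n) : R :=
  Num.sqrt (\sum_(i < n) (x ord0 i) ^+ 2).

Definition inner_semicont_rel (Y X : topologicalType) (G : Y -> set X) (D : set Y) : Prop :=
  forall y, D y -> forall x, G y x ->
  forall yl : nat -> Y, (forall l, D (yl l)) -> yl @ \oo --> y ->
  exists xl : nat -> X, (forall l, G (yl l) (xl l)) /\ xl @ \oo --> x.

Definition Gmap (R : realType) (p q m : nat) (U : set 'rV[R]_p)
  (h : 'rV[R]_p * 'rV[R]_q -> 'rV[R]_m) (y : 'rV[R]_q) : set 'rV[R]_p :=
  [set x | U x /\ forall i : 'I_m, 0 <= h (x, y) ord0 i].

Definition domG (R : realType) (p q m : nat) (U : set 'rV[R]_p) (V : set 'rV[R]_q)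
  (h : 'rV[R]_p * 'rV[R]_q -> 'rV[R]_m) : set 'rV[R]_q :=
  [set y | V y /\ Gmap U h y !=set0].

From HB Require Import structures.
From mathcomp Require Import all_boot all_order all_algebra.
From mathcomp Require Import all_classical all_reals all_analysis.
Import Order.TTheory GRing.Theory Num.Theory.
Import numFieldNormedType.Exports.
Local Open Scope classical_set_scope.
Local Open Scope ring_scope.

(* Feasibility passes to the limit because U and V are closed and h is
   continuous.  For optimality, take x feasible at ys: inner semicontinuity
   yields points feasible at y_ k converging to x, against which the minimizer
   x_ k is compared.  The proximal terms vanish in the limit, since tau k -> 0
   while the distances converge, so f (xs, ys) <= f (x, ys). *)

Lemma cvg_within_continuous {T U : topologicalType} {A : set T} {g : T -> U}
    {u : nat -> T} {x : T} :
  {within A, continuous g} -> A x -> (\forall n \near \oo, A (u n)) ->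
  u @ \oo --> x -> (fun n => g (u n)) @ \oo --> g x.
Proof.
move=> /subspace_continuousP cg Ax Au ux.
apply: (cvg_trans _ (cg x Ax)) => P /= /ux.
by apply: filterS2 Au => n Aun; apply.
Qed.

Lemma cvg_row_coord {K : numFieldType} {n} {v : nat -> 'rV[K]_n} {l : 'rV[K]_n} i :
  v @ \oo --> l -> (fun k => v k ord0 i) @ \oo --> l ord0 i.
Proof.
by move=> vl; apply: (cvg_comp v (fun M : 'rV[K]_n => M ord0 i) vl);
  exact: coord_continuous.
Qed.

Lemma enorm_continuous (R : realType) n : continuous (@enorm R n).
Proof.
move=> x; apply: continuous_comp; last exact: sqrt_continuous.
apply: (@cvg_big _ _ _ _ _ add_continuous _ (nbhs x)) => i _.
by apply: cvgM; exact: coord_continuous.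
Qed.

Lemma cvg_proximal_term0 {R : realType} {n} {tau : nat -> R} {d : nat -> 'rV[R]_n}
    {l : 'rV[R]_n} :
  tau @ \oo --> 0 -> d @ \oo --> l ->
  (fun k => tau k * enorm (d k) ^+ 2) @ \oo --> 0.
Proof.
move=> tau0 dl; rewrite -(mul0r (enorm l ^+ 2)); apply: cvgM => //.
have dnl : (fun k => enorm (d k)) @ \oo --> enorm l.
  by apply: cvg_comp dl _; exact: enorm_continuous.
by rewrite expr2; under eq_cvg do rewrite expr2; exact: cvgM.
Qed.

Lemma ler_cvg_to_vanishing {R : realFieldType} {u v e : nat -> R} {a b : R} :
  u @ \oo --> a -> v @ \oo --> b -> e @ \oo --> 0 ->
  (\forall k \near \oo, u k <= v k + e k) -> a <= b.
Proof.
by move=> ua vb e0; rewrite -[b]addr0; apply: ler_cvg_to ua _; exact: cvgD.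
Qed.

Lemma Gmap_closed_graph {R : realType} {p q m : nat}
    {U : set 'rV[R]_p} {V : set 'rV[R]_q} {h : 'rV[R]_p * 'rV[R]_q -> 'rV[R]_m}
    {x_ : nat -> 'rV[R]_p} {y_ : nat -> 'rV[R]_q} {xs : 'rV[R]_p} {ys : 'rV[R]_q} :
  closed U -> closed V -> {within U `*` V, continuous h} ->
  (\forall k \near \oo, V (y_ k) /\ Gmap U h (y_ k) (x_ k)) ->
  x_ @ \oo --> xs -> y_ @ \oo --> ys -> Gmap U h ys xs.
Proof.
move=> cU cV ch feas xc yc.
have UVk : \forall k \near \oo, (U `*` V) (x_ k, y_ k).
  by apply: filterS feas => k [Vy [Ux _]].
have UVs : (U `*` V) (xs, ys).
  split; [apply: (closed_cvg _ cU _ _ xc) | apply: (closed_cvg _ cV _ _ yc)].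
    by apply: filterS feas => k [_ []].
  by apply: filterS feas => k [].
split=> [|i]; first exact: UVs.1.
have pc : (fun k => (x_ k, y_ k)) @ \oo --> (xs, ys) by exact: (cvg_pair xc yc).
have hc := cvg_within_continuous ch UVs UVk pc.
apply: (ler_cvg_to (cvg_cst 0) (cvg_row_coord i hc)).
by apply: filterS feas => k [_ [_]].
Qed.

Section proximal_limit_optimality.
Context {R : realType} {p q m : nat}.
Context {U : set 'rV[R]_p} {V : set 'rV[R]_q}.
Context {f : 'rV[R]_p * 'rV[R]_q -> R} {h : 'rV[R]_p * 'rV[R]_q -> 'rV[R]_m}.
Context {x_ : nat -> 'rV[R]_p} {y_ : nat -> 'rV[R]_q}.
Context {xs : 'rV[R]_p} {ys : 'rV[R]_q} {tau : nat -> R}.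
Hypotheses (cV : closed V) (cf : {within U `*` V, continuous f}).
Hypotheses (Ux : forall k, U (x_ k)) (Dy : forall k, domG U V h (y_ k)).
Hypotheses (xc : x_ @ \oo --> xs) (yc : y_ @ \oo --> ys).
Hypotheses (tau_ge0 : forall k, 0 <= tau k) (tau0 : tau @ \oo --> 0).
Hypothesis prox_min : \forall k \near \oo, forall x, Gmap U h (y_ k) x ->
  f (x_ k, y_ k) + tau k * enorm (x_ k - x_ k.-1) ^+ 2
  <= f (x, y_ k) + tau k * enorm (x - x_ k.-1) ^+ 2.
Hypothesis isc : inner_semicont_rel (Gmap U h) (domG U V h).
Hypothesis Gs : Gmap U h ys xs.

Lemma limit_minimizes x : Gmap U h ys x -> f (xs, ys) <= f (x, ys).
Proof.
move=> Gx.
have Vy k : V (y_ k) by case: (Dy k).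
have Vys : V ys by apply: (closed_cvg _ cV _ _ yc); exact: nearW.
have Dys : domG U V h ys by split=> //; exists xs.
have [xl [Gxl xlc]] := isc _ Dys _ Gx _ Dy yc.
have pc : (fun k => (x_ k, y_ k)) @ \oo --> (xs, ys) by exact: (cvg_pair xc yc).
have plc : (fun k => (xl k, y_ k)) @ \oo --> (x, ys) by exact: (cvg_pair xlc yc).
have UVs : (U `*` V) (xs, ys) by split; [exact: Gs.1 | exact: Vys].
have UVx : (U `*` V) (x, ys) by split; [exact: Gx.1 | exact: Vys].
have UVk : \forall k \near \oo, (U `*` V) (x_ k, y_ k).
  by apply: nearW => k; split; [exact: Ux | exact: Vy].
have UVl : \forall k \near \oo, (U `*` V) (xl k, y_ k).
  by apply: nearW => k; split; [exact: (Gxl k).1 | exact: Vy].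
have fc := cvg_within_continuous cf UVs UVk pc.
have flc := cvg_within_continuous cf UVx UVl plc.
have xc_prev : (fun k => x_ k.-1) @ \oo --> xs by rewrite -cvg_shiftS.
have dc : (fun k => xl k - x_ k.-1) @ \oo --> x - xs by exact: cvgB.
apply: (ler_cvg_to_vanishing fc flc (cvg_proximal_term0 tau0 dc)).
apply: filterS prox_min => k /(_ _ (Gxl k)); apply: le_trans.
by rewrite lerDl mulr_ge0 ?sqr_ge0.
Qed.

End proximal_limit_optimality.

Theorem lemma3p6 (R : realType) (p q m : nat)
  (U : set 'rV[R]_p) (V : set 'rV[R]_q)
  (f : 'rV[R]_p * 'rV[R]_q -> R) (h : 'rV[R]_p * 'rV[R]_q -> 'rV[R]_m)
  (x_ : nat -> 'rV[R]_p) (y_ : nat -> 'rV[R]_q) (xs : 'rV[R]_p) (ys : 'rV[R]_q)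
  (tau : nat -> R) :
  closed U -> closed V ->
  {within U `*` V, continuous f} -> {within U `*` V, continuous h} ->
  (forall k, U (x_ k)) -> (forall k, domG U V h (y_ k)) ->
  x_ @ \oo --> xs -> y_ @ \oo --> ys ->
  (forall k, 0 <= tau k) -> tau @ \oo --> 0 ->
  (forall k, (1 <= k)%N ->
     Gmap U h (y_ k) (x_ k) /\
     forall x, Gmap U h (y_ k) x ->
       f (x_ k, y_ k) + tau k * enorm (x_ k - x_ k.-1) ^+ 2
       <= f (x, y_ k) + tau k * enorm (x - x_ k.-1) ^+ 2) ->
  inner_semicont_rel (Gmap U h) (domG U V h) ->
  Gmap U h ys xs /\ forall x, Gmap U h ys x -> f (xs, ys) <= f (x, ys).
Proof.
move=> cU cV cf ch Ux Dy xc yc tau_ge0 tau0 prox isc.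
have Gs : Gmap U h ys xs.
  apply: (Gmap_closed_graph cU cV ch _ xc yc).
  by exists 1%N => // k /prox [Gk _]; split=> //; case: (Dy k).
split=> // x; apply: (limit_minimizes cV cf Ux Dy xc yc tau_ge0 tau0 _ isc Gs).
by exists 1%N => // k /prox [].
Qed.
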